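(* Let $k\ge1$, let $\theta_1,\dots,\theta_{k+1}\in[-\frac{\pi}{2},\frac{\pi}{2}]$ be pairwise distinct, $\theta_{\min}=\min_{p\ne j}|\theta_p-\theta_j|$, and $a=(a_1,\dots,a_{k+1})^T\in\mathbb C^{k+1}$ with $|a_j|\ge m_{\min}>0$ for all $j$. Let $A=(\phi_{2k}(e^{i\theta_1}),\dots,\phi_{2k}(e^{i\theta_{k+1}}))$. For $q\le k$ and $\hat\theta_1,\dots,\hat\theta_q\in\mathbb R$, $\hat a(q)=(\hat a_1,\dots,\hat a_q)^T\in\mathbb C^q$, let $\hat A(q)=(\phi_{2k}(e^{i\hat\theta_1}),\dots,\phi_{2k}(e^{i\hat\theta_q}))$. Then $$\min_{\hat a_p\in\mathbb C,\ \hat\theta_p\in\mathbb R,\ p=1,\dots,q}\|\hat A(q)\hat a(q)-Aa\|_2\ge\frac{\zeta(k+1)\,\xi(k)\,m_{\min}\,\theta_{\min}^{2k}}{\pi^{2k}}.$$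
   Context: $\phi_s(z)=(1,z,\dots,z^s)^T$. For an integer $k\ge1$: $\zeta(k)=\big((\tfrac{k-1}{2})!\big)^2$ if $k$ is odd, $\zeta(k)=(\tfrac{k}{2})!(\tfrac{k-2}{2})!$ if $k$ is even; $\xi(1)=\frac12$, $\xi(k)=\frac{(\frac{k-1}{2})!(\frac{k-3}{2})!}{4}$ if $k\ge3$ is odd, $\xi(k)=\frac{((\frac{k-2}{2})!)^2}{4}$ if $k$ is even. *)

From Stdlib Require Import Reals Lra Lia Arith.
Open Scope R_scope.

(* Complex numbers as (real part, imaginary part). *)
Definition Cpx : Type := (R * R)%type.
Definition Cadd (z w : Cpx) : Cpx := (fst z + fst w, snd z + snd w).
Definition Copp (z : Cpx) : Cpx := (- fst z, - snd z).
Definition Cmul (z w : Cpx) : Cpx :=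
  (fst z * fst w - snd z * snd w, fst z * snd w + snd z * fst w).
Definition C0 : Cpx := (0, 0).
Definition C1 : Cpx := (1, 0).
Definition Cmod (z : Cpx) : R := sqrt (fst z ^ 2 + snd z ^ 2).
Fixpoint Cpow (z : Cpx) (n : nat) : Cpx :=
  match n with O => C1 | S n => Cmul z (Cpow z n) end.
Definition Cexpi (t : R) : Cpx := (cos t, sin t).

Fixpoint Rsum (n : nat) (f : nat -> R) : R :=
  match n with O => 0 | S n => Rsum n f + f n end.
Fixpoint Csum (n : nat) (f : nat -> Cpx) : Cpx :=
  match n with O => C0 | S n => Cadd (Csum n f) (f n) end.

(* phi_s(z) = (1, z, ..., z^s)^T : entry l (0 <= l <= s) is z^l *)
Definition phi (s : nat) (z : Cpx) (l : nat) : Cpx := Cpow z l.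

(* (M c)_l where M = (phi_s(e^{i t_0}), ..., phi_s(e^{i t_{n-1}})) and c in Cpx^n *)
Definition mat_vec (s n : nat) (t : nat -> R) (c : nat -> Cpx) (l : nat) : Cpx :=
  Csum n (fun j => Cmul (phi s (Cexpi (t j)) l) (c j)).

Definition norm2 (s : nat) (v : nat -> Cpx) : R :=
  sqrt (Rsum (S s) (fun l => Cmod (v l) ^ 2)).

Definition zeta (k : nat) : R :=
  if Nat.odd k then INR (fact ((k - 1) / 2)) ^ 2
  else INR (fact (k / 2)) * INR (fact ((k - 2) / 2)).

Definition xi (k : nat) : R :=
  if Nat.eqb k 1 then 1 / 2
  else if Nat.odd k then INR (fact ((k - 1) / 2)) * INR (fact ((k - 3) / 2)) / 4
  else INR (fact ((k - 2) / 2)) ^ 2 / 4.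

(* Apply to the residual (V_l), l = 0..2k, the difference operator prod_i (E - r_i),
   E the shift, whose 2k unimodular roots are the q estimated frequencies (padded by 1) and
   the true frequencies e^(i theta_j), j <> j0.  It annihilates every exponential except
   e^(i theta_j0), so it maps V to (prod_i (e^(i theta_j0) - r_i)) a_j0, while it enlarges
   sup norms by at most 2^(2k).  The index j0 comes from the divided-difference identity
   sum_j Q(x_j) / prod_(p<>j) (x_j - x_p) = 1 for the monic degree-k polynomial Q with the
   estimated roots: some j0 has |prod_(p<>j0) (x_j0 - x_p)| <= (k+1) |Q(x_j0)|, whence
   m_min |prod_(p<>j0) (x_j0 - x_p)|^2 <= (k+1) 4^k |V|.  Finally the chord bound
   |e^(is) - e^(it)| >= 2|s-t|/pi and a pigeonhole estimate for products of theta_min-separated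
   numbers give prod_(p<>j0) |theta_p - theta_j0| >= floor(k/2)! ceil(k/2)! theta_min^k,
   and floor(k/2)! ceil(k/2)! = zeta(k+1) >= (k+1) xi(k). *)

From Stdlib Require Import Reals Lra Lia Arith List ZArith Classical.
From Coquelicot Require Import Coquelicot.
From Pilot Require Import Defs.
Open Scope R_scope.

(* Coquelicot's modulus; [Defs.Cmod] unfolds to the same term. *)
Local Notation Cnorm := Complex.Cmod.

(** * Chords of the unit circle *)

Lemma Cmod_Cexpi (t : R) : Cnorm (Cexpi t) = 1.
Proof.
  unfold Complex.Cmod, Cexpi; simpl.
  replace (cos t * (cos t * 1) + sin t * (sin t * 1)) with 1; [apply sqrt_1|].
  pose proof (sin2_cos2 t) as E; unfold Rsqr in E; lra.
Qed.

(* Jordan's inequality; near [PI/2] the Taylor bound of [cos] at [PI/2 - y] is used,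
   near [0] that of [sin] at [y]. *)
Lemma sin_ge_Jordan (y : R) : 0 <= y <= PI / 2 -> 2 * y / PI <= sin y.
Proof.
  intros [Hy0 Hy1].
  pose proof PI_4 as HPI4; pose proof PI2_1 as HPI1.
  assert (HPI : 0 < PI) by lra.
  destruct (Rle_dec (PI / 2 - y) (4 / PI)) as [Hu | Hu].
  - rewrite <- cos_shift; set (u := PI / 2 - y).
    destruct (COS u) as [Hc _]; try (unfold u; lra).
    replace (cos_lb u) with (1 - u ^ 2 / 2 + u ^ 4 / 24 - u ^ 6 / 720) in Hc
      by (unfold cos_lb, cos_approx, cos_term; simpl; field).
    assert (Hu2 : u ^ 2 <= 4) by (unfold u in *; nra).
    assert (0 <= u ^ 4 / 24 - u ^ 6 / 720).
    { replace (u ^ 4 / 24 - u ^ 6 / 720) with (u ^ 4 * (30 - u ^ 2) / 720) by field.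
      assert (0 <= u ^ 4) by (apply pow_le; unfold u; lra).
      apply Rmult_le_pos; [apply Rmult_le_pos|]; lra. }
    assert (u ^ 2 / 2 <= 2 * u / PI).
    { apply (Rmult_le_reg_r PI); [lra|].
      replace (2 * u / PI * PI) with (2 * u) by (field; lra).
      assert (u * PI <= 4).
      { apply (Rmult_le_compat_r PI) in Hu; [|lra].
        replace (4 / PI * PI) with 4 in Hu by (field; lra). exact Hu. }
      assert (0 <= u) by (unfold u; lra).
      assert (u * (u * PI) <= u * 4) by (apply Rmult_le_compat_l; lra).
      lra. }
    replace (2 * y / PI) with (1 - 2 * u / PI) by (unfold u; field; lra).
    lra.
  - destruct (SIN y) as [Hs _]; try lra.
    replace (sin_lb y) with (y - y ^ 3 / 6 + y ^ 5 / 120 - y ^ 7 / 5040) in Hs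
      by (unfold sin_lb, sin_approx, sin_term; simpl; field).
    assert (H4PI : 4 / PI * PI = 4) by (field; lra).
    assert (Hy : y <= 1).
    { enough (1 <= 4 / PI) by lra.
      apply (Rmult_le_reg_r PI); lra. }
    assert (0 <= y ^ 5 / 120 - y ^ 7 / 5040).
    { replace (y ^ 5 / 120 - y ^ 7 / 5040) with (y ^ 5 * (42 - y ^ 2) / 5040) by field.
      assert (0 <= y ^ 5) by (apply pow_le; lra).
      apply Rmult_le_pos; [apply Rmult_le_pos|]; nra. }
    assert (2 / PI <= 5 / 6).
    { assert (8 < PI * PI) by (assert (4 / PI < PI / 2) by lra; nra).
      apply (Rmult_le_reg_r PI); [lra|].
      replace (2 / PI * PI) with 2 by (field; lra). nra. }
    replace (2 * y / PI) with (y * (2 / PI)) by (field; lra).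
    assert (y * (2 / PI) <= y * (1 - y ^ 2 / 6)) by (apply Rmult_le_compat_l; nra).
    lra.
Qed.

Lemma Cmod_Cexpi_sub (s t : R) :
  Cnorm (Cexpi s - Cexpi t)%C = 2 * Rabs (sin ((s - t) / 2)).
Proof.
  unfold Complex.Cmod, Cexpi, Cminus, Cplus, Copp; simpl.
  replace ((cos s + - cos t) * ((cos s + - cos t) * 1)
           + (sin s + - sin t) * ((sin s + - sin t) * 1))
    with (Rsqr (2 * sin ((s - t) / 2))).
  - rewrite sqrt_Rsqr_abs, Rabs_mult, Rabs_right; lra.
  - pose proof (cos_minus s t); pose proof (sin2_cos2 s); pose proof (sin2_cos2 t).
    pose proof (cos_2a_sin ((s - t) / 2)) as H2.
    replace (2 * ((s - t) / 2)) with (s - t) in H2 by field.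
    unfold Rsqr in *; nra.
Qed.

Lemma Cmod_Cexpi_sub_ge (s t : R) :
  Rabs (s - t) <= PI -> 2 * Rabs (s - t) / PI <= Cnorm (Cexpi s - Cexpi t)%C.
Proof.
  intros Hst; rewrite Cmod_Cexpi_sub.
  pose proof PI_RGT_0.
  assert (Habs : Rabs (sin ((s - t) / 2)) = sin (Rabs (s - t) / 2)).
  { unfold Rabs at 2; destruct (Rcase_abs (s - t)).
    - replace (- (s - t) / 2) with (- ((s - t) / 2)) by field.
      rewrite sin_neg, <- Rabs_Ropp, <- sin_neg, Rabs_right; [reflexivity|].
      rewrite Rabs_left in Hst by lra. apply Rle_ge, sin_ge_0; lra.
    - rewrite Rabs_right in Hst by lra. apply Rabs_right, Rle_ge, sin_ge_0; lra. }
  rewrite Habs.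
  pose proof (Rabs_pos (s - t)).
  pose proof (sin_ge_Jordan (Rabs (s - t) / 2) ltac:(lra)).
  replace (2 * Rabs (s - t) / PI) with (2 * (2 * (Rabs (s - t) / 2) / PI)) by (field; lra).
  lra.
Qed.

Lemma Cexpi_inj_on (s t : R) : Rabs (s - t) <= PI -> Cexpi s = Cexpi t -> s = t.
Proof.
  intros Hst E; pose proof (Cmod_Cexpi_sub_ge s t Hst) as Hc.
  replace (Cexpi s - Cexpi t)%C with (RtoC 0) in Hc by (rewrite E; ring).
  rewrite Cmod_0 in Hc; pose proof PI_RGT_0; pose proof (Rabs_pos (s - t)).
  assert (Rabs (s - t) = 0).
  { apply Rle_antisym; [|lra].
    apply (Rmult_le_reg_l (2 / PI)); [apply Rdiv_lt_0_compat; lra|].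
    unfold Rdiv in *; lra. }
  now apply Rminus_diag_uniq, Rabs_eq_0.
Qed.

(** * Finite sums and products *)

Definition skip (i m : nat) : nat := if (m <? i)%nat then m else S m.

Lemma skip_neq i m : skip i m <> i.
Proof. unfold skip; destruct (Nat.ltb_spec m i); lia. Qed.

Lemma skip_le i m n : (m < n)%nat -> (skip i m <= n)%nat.
Proof. unfold skip; destruct (Nat.ltb_spec m i); lia. Qed.

Lemma skip_inj i m m' : skip i m = skip i m' -> m = m'.
Proof. unfold skip; destruct (Nat.ltb_spec m i), (Nat.ltb_spec m' i); lia. Qed.

Lemma skip_last n m : (m < n)%nat -> skip n m = m.
Proof. unfold skip; destruct (Nat.ltb_spec m n); lia. Qed.

Lemma skip_onto i n j : (i <= n)%nat -> (j <= n)%nat -> j <> i ->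
  exists m, (m < n)%nat /\ skip i m = j.
Proof.
  intros Hi Hj Hji; destruct (Nat.ltb_spec j i).
  - exists j; unfold skip; destruct (Nat.ltb_spec j i); split; lia.
  - exists (j - 1)%nat; unfold skip; destruct (Nat.ltb_spec (j - 1) i); split; lia.
Qed.

Section IteratedOp.

Variables (T : Type) (op : T -> T -> T) (idx : T).
Hypothesis op_assoc : forall x y z, op x (op y z) = op (op x y) z.
Hypothesis op_comm : forall x y, op x y = op y x.
Hypothesis op_idx : forall x, op x idx = x.

Fixpoint iter_op (n : nat) (f : nat -> T) : T :=
  match n with O => idx | S n => op (iter_op n f) (f n) end.

Lemma iter_op_ext n f g : (forall i, (i < n)%nat -> f i = g i) -> iter_op n f = iter_op n g.
Proof.
  induction n as [|n IH]; intros Hfg; simpl; [reflexivity|].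
  rewrite IH, Hfg; auto with arith.
Qed.

Lemma iter_op_skip n f i : (i <= n)%nat ->
  iter_op (S n) f = op (f i) (iter_op n (fun m => f (skip i m))).
Proof.
  induction n as [|n IH]; intros Hi.
  - replace i with 0%nat by lia; simpl; apply op_comm.
  - change (iter_op (S (S n)) f) with (op (iter_op (S n) f) (f (S n))).
    destruct (Nat.eq_dec i (S n)) as [-> | Hne].
    + rewrite (iter_op_ext (S n) (fun m => f (skip (S n) m)) f)
        by (intros; rewrite skip_last by lia; reflexivity).
      apply op_comm.
    + rewrite IH by lia; simpl.
      replace (skip i n) with (S n) by (unfold skip; destruct (Nat.ltb_spec n i); lia).
      now rewrite op_assoc.
Qed.

Lemma iter_op_add n m f :
  iter_op (n + m) f = op (iter_op n f) (iter_op m (fun i => f (n + i)%nat)).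
Proof.
  induction m as [|m IH]; simpl.
  - now rewrite Nat.add_0_r, op_idx.
  - now rewrite Nat.add_succ_r; simpl; rewrite IH, op_assoc.
Qed.

End IteratedOp.

Arguments iter_op {T} op idx n f.

Definition Cprod : nat -> (nat -> C) -> C := iter_op Cmult 1%C.
Definition Rprod : nat -> (nat -> R) -> R := iter_op Rmult 1.

Lemma Csum_iter_op n (f : nat -> C) : Csum n f = iter_op Cplus 0%C n f.
Proof. induction n as [|n IH]; simpl; [reflexivity|]; now rewrite IH. Qed.

Lemma Csum_ext n (f g : nat -> C) :
  (forall i, (i < n)%nat -> f i = g i) -> (Csum n f : C) = Csum n g.
Proof. rewrite !Csum_iter_op; apply iter_op_ext. Qed.

Lemma Csum_skip n f i : (i <= n)%nat ->
  (Csum (S n) f : C) = (f i + Csum n (fun m => f (skip i m)))%C.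
Proof.
  intros Hi; rewrite !Csum_iter_op; apply iter_op_skip; auto; intros; ring.
Qed.

Lemma Csum_sub n f g : (Csum n (fun j => f j - g j)%C : C) = (Csum n f - Csum n g)%C.
Proof.
  rewrite (Csum_iter_op n f), (Csum_iter_op n g), Csum_iter_op.
  induction n as [|n IH]; cbn [iter_op]; [ring|]; rewrite IH; ring.
Qed.

Lemma Csum_scale n (f : nat -> C) c : (Csum n (fun j => c * f j)%C : C) = (c * Csum n f)%C.
Proof.
  rewrite (Csum_iter_op n f), Csum_iter_op.
  induction n as [|n IH]; cbn [iter_op]; [ring|]; rewrite IH; ring.
Qed.

Lemma Csum_zero n (f : nat -> C) : (forall i, (i < n)%nat -> f i = 0%C) -> (Csum n f : C) = 0%C.
Proof.
  rewrite Csum_iter_op; induction n as [|n IH]; intros Hf; simpl; [reflexivity|].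
  rewrite IH, Hf; [ring | lia | intros; apply Hf; lia].
Qed.

Lemma Cnorm_Csum_le n f : Cnorm (Csum n f) <= Rsum n (fun i => Cnorm (f i)).
Proof.
  induction n as [|n IH]; simpl.
  - change (Cnorm 0 <= 0); rewrite Cmod_0; lra.
  - change (Cnorm (Csum n f + f n)%C <= Rsum n (fun i => Cnorm (f i)) + Cnorm (f n)).
    eapply Rle_trans; [apply Cmod_triangle | lra].
Qed.

Lemma Rsum_ge_exists n f b :
  INR (S n) * b <= Rsum (S n) f -> exists i, (i <= n)%nat /\ b <= f i.
Proof.
  induction n as [|n IH]; intros Hsum.
  - exists 0%nat; simpl in Hsum; split; [lia | lra].
  - destruct (Rle_dec b (f (S n))) as [Hb | Hb]; [exists (S n); split; [lia | lra]|].
    destruct IH as [i [Hi Hfi]]; [|exists i; split; [lia | exact Hfi]].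
    change (Rsum (S (S n)) f) with (Rsum (S n) f + f (S n)) in Hsum.
    rewrite S_INR in Hsum; lra.
Qed.

Lemma Rsum_ge_term n f i :
  (forall j, (j < n)%nat -> 0 <= f j) -> (i < n)%nat -> f i <= Rsum n f.
Proof.
  induction n as [|n IH]; intros Hf Hi; [lia|]; simpl.
  assert (Hpos : 0 <= Rsum n f).
  { clear IH Hi; induction n as [|n IHn]; simpl; [lra|].
    pose proof (Hf n ltac:(lia)); pose proof (IHn ltac:(intros; apply Hf; lia)); lra. }
  pose proof (Hf n ltac:(lia)).
  destruct (Nat.eq_dec i n) as [-> | Hne]; [lra|].
  pose proof (IH ltac:(intros; apply Hf; lia) ltac:(lia)); lra.
Qed.

Lemma Cprod_ext n (f g : nat -> C) :
  (forall i, (i < n)%nat -> f i = g i) -> Cprod n f = Cprod n g.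
Proof. apply iter_op_ext. Qed.

Lemma Cprod_skip n (f : nat -> C) i : (i <= n)%nat ->
  Cprod (S n) f = (f i * Cprod n (fun m => f (skip i m)))%C.
Proof. intros Hi; apply iter_op_skip; auto; intros; ring. Qed.

Lemma Cprod_add n m (f : nat -> C) :
  Cprod (n + m) f = (Cprod n f * Cprod m (fun i => f (n + i)%nat))%C.
Proof. apply iter_op_add; intros; ring. Qed.

Lemma Cprod_eq0 n (f : nat -> C) i : (i < n)%nat -> f i = 0%C -> Cprod n f = 0%C.
Proof.
  induction n as [|n IH]; intros Hi Hfi; [lia|]; unfold Cprod; simpl; fold Cprod.
  destruct (Nat.eq_dec i n) as [<- | Hne]; [rewrite Hfi | rewrite IH by (lia || exact Hfi)]; ring.
Qed.

Lemma Cprod_neq0 n (f : nat -> C) : (forall i, (i < n)%nat -> f i <> 0%C) -> Cprod n f <> 0%C.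
Proof.
  induction n as [|n IH]; intros Hf; unfold Cprod; simpl; fold Cprod.
  - intros E; injection E; lra.
  - apply Cmult_neq_0; [apply IH; intros | apply Hf]; auto with arith.
Qed.

Lemma Cnorm_Cprod n (f : nat -> C) : Cnorm (Cprod n f) = Rprod n (fun i => Cnorm (f i)).
Proof.
  induction n as [|n IH]; unfold Cprod, Rprod in *; simpl.
  - apply Cmod_1.
  - now rewrite Cmod_mult, IH.
Qed.

Lemma Rprod_skip n f i : (i <= n)%nat -> Rprod (S n) f = f i * Rprod n (fun m => f (skip i m)).
Proof. intros Hi; apply iter_op_skip; auto; intros; ring. Qed.

Lemma Rprod_nonneg n f : (forall i, (i < n)%nat -> 0 <= f i) -> 0 <= Rprod n f.
Proof.
  induction n as [|n IH]; intros Hf; unfold Rprod; simpl; fold Rprod; [lra|].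
  apply Rmult_le_pos; [apply IH; intros | apply Hf]; auto with arith.
Qed.

Lemma Rprod_le n f g : (forall i, (i < n)%nat -> 0 <= f i <= g i) -> Rprod n f <= Rprod n g.
Proof.
  induction n as [|n IH]; intros Hfg; unfold Rprod; simpl; fold Rprod; [lra|].
  apply Rmult_le_compat; try apply Hfg; try lia.
  - apply Rprod_nonneg; intros; apply Hfg; lia.
  - apply IH; intros; apply Hfg; lia.
Qed.

Lemma Rprod_mult n f g : Rprod n (fun i => f i * g i) = Rprod n f * Rprod n g.
Proof. induction n as [|n IH]; unfold Rprod in *; simpl; [ring|]; rewrite IH; ring. Qed.

Lemma Rprod_const n c : Rprod n (fun _ => c) = c ^ n.
Proof. induction n as [|n IH]; unfold Rprod in *; simpl; [ring|]; rewrite IH; ring. Qed.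

(** * Divided differences *)

Definition distinct (x : nat -> C) (n : nat) : Prop :=
  forall i j, (i <= n)%nat -> (j <= n)%nat -> i <> j -> x i <> x j.

Definition node_prod (x : nat -> C) (n j : nat) : C :=
  Cprod (S n) (fun j' => if (j' =? j)%nat then 1%C else (x j - x j')%C).

Definition divdiff (x : nat -> C) (n : nat) (f : C -> C) : C :=
  Csum (S n) (fun j => f (x j) / node_prod x n j)%C.

Definition poly_of_roots (r : nat -> C) (n : nat) (z : C) : C :=
  Cprod n (fun i => z - r i)%C.

Lemma Cminus_neq0 (u v : C) : u <> v -> (u - v)%C <> 0%C.
Proof. intros Huv E; apply Huv; replace u with (u - v + v)%C by ring; rewrite E; ring. Qed.

Lemma distinct_skip x n i : distinct x (S n) -> distinct (fun m => x (skip i m)) n.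
Proof.
  intros Hd p p' Hp Hp' Hpp'; apply Hd; try (apply skip_le; lia).
  intros E; apply Hpp', (skip_inj i), E.
Qed.

Lemma node_prod_skip x n j : (j <= n)%nat ->
  node_prod x n j = Cprod n (fun m => x j - x (skip j m))%C.
Proof.
  intros Hj; unfold node_prod; rewrite (Cprod_skip _ _ j Hj), Nat.eqb_refl, Cmult_1_l.
  apply Cprod_ext; intros m _.
  destruct (Nat.eqb_spec (skip j m) j) as [E | _]; [now destruct (skip_neq j m) | reflexivity].
Qed.

Lemma node_prod_remove x n i m : (i <= S n)%nat ->
  node_prod x (S n) (skip i m) =
  ((x (skip i m) - x i) * node_prod (fun p => x (skip i p)) n m)%C.
Proof.
  intros Hi; unfold node_prod; rewrite (Cprod_skip _ _ i Hi).
  destruct (Nat.eqb_spec i (skip i m)) as [E | _]; [now destruct (skip_neq i m)|].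
  f_equal; apply Cprod_ext; intros m' _.
  destruct (Nat.eqb_spec (skip i m') (skip i m)) as [E | Hne];
    destruct (Nat.eqb_spec m' m) as [-> | Hne']; try reflexivity.
  - now destruct (Hne' (skip_inj i _ _ E)).
  - now destruct Hne.
Qed.

Lemma node_prod_neq0 x n j : distinct x n -> (j <= n)%nat -> node_prod x n j <> 0%C.
Proof.
  intros Hd Hj; unfold node_prod; apply Cprod_neq0; intros i Hi.
  destruct (Nat.eqb_spec i j).
  - intros E; injection E; lra.
  - apply Cminus_neq0, Hd; lia.
Qed.

Lemma divdiff_ext x n f g : (forall z, f z = g z) -> divdiff x n f = divdiff x n g.
Proof. intros Hfg; unfold divdiff; apply Csum_ext; intros; now rewrite Hfg. Qed.

Lemma divdiff_sub x n f g :
  divdiff x n (fun z => f z - g z)%C = (divdiff x n f - divdiff x n g)%C.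
Proof.
  unfold divdiff; rewrite <- Csum_sub; apply Csum_ext; intros; unfold Cdiv; ring.
Qed.

Lemma divdiff_scale x n f c : divdiff x n (fun z => c * f z)%C = (c * divdiff x n f)%C.
Proof.
  unfold divdiff; rewrite <- Csum_scale; apply Csum_ext; intros; unfold Cdiv; ring.
Qed.

Lemma divdiff_remove x n i g : distinct x (S n) -> (i <= S n)%nat ->
  divdiff x (S n) (fun z => (z - x i) * g z)%C = divdiff (fun m => x (skip i m)) n g.
Proof.
  intros Hd Hi; unfold divdiff; rewrite (Csum_skip _ _ i Hi).
  replace ((x i - x i) * g (x i) / node_prod x (S n) i)%C with (RtoC 0) by (unfold Cdiv; ring).
  rewrite Cplus_0_l; apply Csum_ext; intros m Hm.
  rewrite node_prod_remove by exact Hi.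
  assert (x (skip i m) - x i <> 0)%C
    by (apply Cminus_neq0, Hd; try apply skip_le; auto using skip_neq).
  assert (node_prod (fun p => x (skip i p)) n m <> 0)%C
    by (apply node_prod_neq0; [apply distinct_skip|]; auto; lia).
  now field.
Qed.

Lemma divdiff_one x n : distinct x n ->
  divdiff x n (fun _ => 1%C) = if (n =? 0)%nat then 1%C else 0%C.
Proof.
  revert x; induction n as [|n IH]; intros x Hd.
  - unfold divdiff; rewrite (Csum_skip _ _ 0 (le_n 0)), node_prod_skip by lia.
    change (1 / 1 + 0 = 1)%C; field.
  - assert (Hlast : divdiff x (S n) (fun z => (z - x (S n)) * 1)%C
                    = if (n =? 0)%nat then 1%C else 0%C)
      by (rewrite divdiff_remove by auto; apply IH, distinct_skip; auto).
    assert (Hprev : divdiff x (S n) (fun z => (z - x n) * 1)%C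
                    = if (n =? 0)%nat then 1%C else 0%C)
      by (rewrite divdiff_remove by auto; apply IH, distinct_skip; auto).
    assert (E : ((x (S n) - x n) * divdiff x (S n) (fun _ => 1%C))%C = 0%C).
    { rewrite <- divdiff_scale.
      rewrite (divdiff_ext _ _ _ (fun z => (z - x n) * 1 - (z - x (S n)) * 1)%C)
        by (intros; ring).
      rewrite divdiff_sub, Hlast, Hprev; ring. }
    assert (Hnz : (x (S n) - x n)%C <> 0%C) by (apply Cminus_neq0, Hd; lia).
    replace (divdiff x (S n) (fun _ => 1%C)) with (/ (x (S n) - x n) * 0)%C
      by (rewrite <- E; field; exact Hnz).
    cbn [Nat.eqb]; ring.
Qed.

Lemma divdiff_poly_of_roots c m : forall x n, (m <= n)%nat -> distinct x n ->
  divdiff x n (poly_of_roots c m) = if (m =? n)%nat then 1%C else 0%C.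
Proof.
  induction m as [|m IH]; intros x n Hmn Hd.
  - rewrite (divdiff_ext _ _ _ (fun _ => 1%C)) by reflexivity.
    rewrite divdiff_one by exact Hd; now destruct n.
  - destruct n as [|n]; [lia|].
    rewrite (divdiff_ext _ _ _ (fun z => (z - x (S n)) * poly_of_roots c m z
                                          - (c m - x (S n)) * poly_of_roots c m z)%C)
      by (intros; unfold poly_of_roots, Cprod; cbn [iter_op]; ring).
    rewrite divdiff_sub, divdiff_scale, divdiff_remove, !IH by (auto using distinct_skip; lia).
    replace (m =? S n)%nat with false by (symmetry; apply Nat.eqb_neq; lia).
    cbn [Nat.eqb]; ring.
Qed.

Lemma exists_node_prod_le x n c : distinct x n ->
  exists j, (j <= n)%nat /\
    Cnorm (node_prod x n j) <= INR (S n) * Cnorm (poly_of_roots c n (x j)).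
Proof.
  intros Hd.
  assert (Hone : divdiff x n (poly_of_roots c n) = 1%C)
    by (rewrite divdiff_poly_of_roots, Nat.eqb_refl; auto).
  assert (HS : 0 < INR (S n)) by (apply lt_0_INR; lia).
  destruct (Rsum_ge_exists n (fun j => Cnorm (poly_of_roots c n (x j) / node_prod x n j)%C)
              (/ INR (S n))) as [j [Hj Hge]].
  { rewrite Rinv_r by lra; rewrite <- Cmod_1, <- Hone.
    apply Cnorm_Csum_le. }
  exists j; split; [exact Hj|].
  pose proof (node_prod_neq0 x n j Hd Hj) as Hnz.
  rewrite Cmod_div in Hge by exact Hnz.
  apply Cmod_gt_0 in Hnz.
  apply (Rmult_le_compat_l (INR (S n) * Cnorm (node_prod x n j))) in Hge; [|nra].
  unfold Rdiv in Hge; replace (INR (S n) * Cnorm (node_prod x n j) * / INR (S n))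
    with (Cnorm (node_prod x n j)) in Hge by (field; lra).
  replace (INR (S n) * Cnorm (node_prod x n j)
           * (Cnorm (poly_of_roots c n (x j)) * / Cnorm (node_prod x n j)))
    with (INR (S n) * Cnorm (poly_of_roots c n (x j))) in Hge by (field; lra).
  exact Hge.
Qed.

(** * Shift filters *)

(* [(E - r_(n-1)) ... (E - r_0) v] at index [l], with [E] the shift [v_l |-> v_(l+1)]. *)
Fixpoint shift_filter (r : nat -> C) (n : nat) (v : nat -> C) (l : nat) : C :=
  match n with
  | O => v l
  | S n => (shift_filter r n v (S l) - r n * shift_filter r n v l)%C
  end.

Lemma shift_filter_sub r n (u w : nat -> C) l :
  shift_filter r n (fun l => u l - w l)%C l = (shift_filter r n u l - shift_filter r n w l)%C.
Proof. revert l; induction n as [|n IH]; intros l; simpl; [reflexivity|]; rewrite !IH; ring. Qed.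

Lemma shift_filter_Csum r n N (f : nat -> nat -> C) l :
  shift_filter r n (fun l => Csum N (fun j => f j l)) l
  = Csum N (fun j => shift_filter r n (f j) l).
Proof.
  revert l; induction n as [|n IH]; intros l; simpl; [reflexivity|].
  rewrite !IH, <- Csum_scale, <- Csum_sub; reflexivity.
Qed.

Lemma shift_filter_geom r n (w c : C) l :
  shift_filter r n (fun l => Cpow w l * c)%C l = (poly_of_roots r n w * Cpow w l * c)%C.
Proof.
  revert l; induction n as [|n IH]; intros l; simpl shift_filter.
  - unfold poly_of_roots, Cprod; cbn [iter_op]; ring.
  - rewrite !IH; change (Cpow w (S l)) with (w * Cpow w l)%C.
    unfold poly_of_roots, Cprod; cbn [iter_op]; ring.
Qed.

Lemma shift_filter_mat_vec r n s N t (c : nat -> C) :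
  shift_filter r n (mat_vec s N t c) 0
  = Csum N (fun j => poly_of_roots r n (Cexpi (t j)) * c j)%C.
Proof.
  unfold mat_vec, phi; rewrite shift_filter_Csum.
  apply Csum_ext; intros j _; rewrite shift_filter_geom; change (Cpow _ 0) with (RtoC 1); ring.
Qed.

(* Each factor [E - r_i] with [|r_i| = 1] at most doubles a sup-norm bound. *)
Lemma shift_filter_bound r n (v : nat -> C) s M :
  (forall i, (i < n)%nat -> Cnorm (r i) = 1) ->
  (forall l, (l <= s)%nat -> Cnorm (v l) <= M) ->
  forall l, (l + n <= s)%nat -> Cnorm (shift_filter r n v l) <= 2 ^ n * M.
Proof.
  intros Hr Hv; induction n as [|n IH]; intros l Hl; simpl shift_filter.
  - rewrite pow_O, Rmult_1_l; apply Hv; lia.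
  - unfold Cminus; eapply Rle_trans; [apply Cmod_triangle|].
    rewrite Cmod_opp, Cmod_mult, Hr by lia.
    pose proof (IH ltac:(auto) (S l) ltac:(lia)); pose proof (IH ltac:(auto) l ltac:(lia)).
    simpl pow; lra.
Qed.

Lemma Cnorm_le_norm2 s (v : nat -> C) l : (l <= s)%nat -> Cnorm (v l) <= norm2 s v.
Proof.
  intros Hl; unfold norm2.
  rewrite <- (sqrt_pow2 (Cnorm (v l))) by apply Cmod_ge_0.
  apply sqrt_le_1_alt, (Rsum_ge_term (S s) (fun l => Cnorm (v l) ^ 2)); [|lia].
  intros; apply pow_le, Cmod_ge_0.
Qed.

Lemma poly_of_roots_root r n z i : (i < n)%nat -> r i = z -> poly_of_roots r n z = 0%C.
Proof.
  intros Hi Hz; apply (Cprod_eq0 _ _ i Hi); rewrite Hz; ring.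
Qed.

Lemma shift_filter_residual r n s q k thetah ah theta a j0 : (j0 <= k)%nat ->
  (forall j, (j < q)%nat -> exists i, (i < n)%nat /\ r i = Cexpi (thetah j)) ->
  (forall j, (j <= k)%nat -> j <> j0 -> exists i, (i < n)%nat /\ r i = Cexpi (theta j)) ->
  shift_filter r n (fun l => mat_vec s q thetah ah l - mat_vec s (S k) theta a l)%C 0
  = (- (poly_of_roots r n (Cexpi (theta j0)) * a j0))%C.
Proof.
  intros Hj0 Hhat Hth.
  rewrite shift_filter_sub, !shift_filter_mat_vec, Csum_zero, (Csum_skip _ _ j0 Hj0), Csum_zero.
  - ring.
  - intros m Hm; destruct (Hth (skip j0 m)) as [i [Hi Hri]];
      [apply skip_le; lia | apply skip_neq |].
    rewrite (poly_of_roots_root _ _ _ i Hi Hri); ring.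
  - intros j Hj; destruct (Hhat j Hj) as [i [Hi Hri]].
    rewrite (poly_of_roots_root _ _ _ i Hi Hri); ring.
Qed.

(** * Products of separated numbers *)

Definition half_fact_prod (n : nat) : R := INR (fact (n / 2)) * INR (fact ((n + 1) / 2)).

Lemma half_fact_prod_S n : half_fact_prod (S n) = half_fact_prod n * (INR (n / 2) + 1).
Proof.
  unfold half_fact_prod.
  replace (S n / 2)%nat with ((n + 1) / 2)%nat by (f_equal; lia).
  replace ((S n + 1) / 2)%nat with (S (n / 2))
    by (replace (S n + 1)%nat with (n + 1 * 2)%nat by lia; rewrite Nat.div_add; lia).
  rewrite fact_simpl, mult_INR, S_INR; ring.
Qed.

Lemma Int_part_range r (h : nat) : 1 <= r < INR h + 1 -> (1 <= Int_part r <= Z.of_nat h)%Z.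
Proof.
  intros [H1 H2]; destruct (base_Int_part r) as [Hlo Hhi]; split.
  - apply le_IZR; apply Rnot_lt_le; intros Hlt.
    assert (Int_part r <= 0)%Z by (apply Z.lt_succ_r, lt_IZR; rewrite succ_IZR; lra).
    apply IZR_le in H; lra.
  - apply Z.lt_succ_r, lt_IZR; rewrite succ_IZR, <- INR_IZR_INZ; lra.
Qed.

Definition signed_floor (d y : R) : Z :=
  if Rle_dec 0 y then Int_part (y / d) else (- Int_part (- y / d))%Z.

Lemma signed_floor_range d y (h : nat) : 0 < d -> d <= Rabs y < (INR h + 1) * d ->
  (0 <= y /\ (1 <= signed_floor d y <= Z.of_nat h)%Z) \/
  (y < 0 /\ (- Z.of_nat h <= signed_floor d y <= -1)%Z).
Proof.
  intros Hd Hy; unfold signed_floor; destruct (Rle_dec 0 y) as [Hs | Hs].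
  - left; split; [lra|]; apply Int_part_range; rewrite Rabs_right in Hy by lra; split.
    + apply (Rmult_le_reg_r d); [lra|]; unfold Rdiv; rewrite Rmult_assoc, Rinv_l; lra.
    + apply (Rmult_lt_reg_r d); [lra|]; unfold Rdiv; rewrite Rmult_assoc, Rinv_l; lra.
  - right; split; [lra|].
    enough (1 <= Int_part (- y / d) <= Z.of_nat h)%Z by lia.
    apply Int_part_range; rewrite Rabs_left in Hy by lra; split.
    + apply (Rmult_le_reg_r d); [lra|]; unfold Rdiv; rewrite Rmult_assoc, Rinv_l; lra.
    + apply (Rmult_lt_reg_r d); [lra|]; unfold Rdiv; rewrite Rmult_assoc, Rinv_l; lra.
Qed.

Lemma signed_floor_close d y y' : 0 < d -> (0 <= y /\ 0 <= y') \/ (y < 0 /\ y' < 0) ->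
  signed_floor d y = signed_floor d y' -> Rabs (y - y') < d.
Proof.
  intros Hd Hyy' E.
  enough (Rabs (y / d - y' / d) < 1) as Hlt.
  { replace (y / d - y' / d) with ((y - y') * / d) in Hlt by (field; lra).
    rewrite Rabs_mult, (Rabs_right (/ d)) in Hlt by (apply Rle_ge, Rlt_le, Rinv_0_lt_compat; lra).
    apply (Rmult_lt_compat_r d) in Hlt; [|lra].
    rewrite Rmult_assoc, Rinv_l, Rmult_1_r in Hlt; lra. }
  unfold signed_floor in E; destruct (Rle_dec 0 y), (Rle_dec 0 y'); try lra.
  - destruct (base_Int_part (y / d)), (base_Int_part (y' / d)).
    rewrite E in *; apply Rabs_def1; lra.
  - assert (E' : Int_part (- y / d) = Int_part (- y' / d)) by lia.
    destruct (base_Int_part (- y / d)), (base_Int_part (- y' / d)).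
    rewrite E' in *; unfold Rdiv in *; apply Rabs_def1; lra.
Qed.

Lemma inj_punctured_range_card (N h : nat) (g : nat -> Z) :
  (forall m, (m < N)%nat -> (1 <= Z.abs (g m) <= Z.of_nat h)%Z) ->
  (forall m m', (m < N)%nat -> (m' < N)%nat -> g m = g m' -> m = m') ->
  (N <= 2 * h)%nat.
Proof.
  intros Hrange Hinj.
  set (codes := map Z.of_nat (seq 1 h) ++ map (fun i => (- Z.of_nat i)%Z) (seq 1 h)).
  assert (Hnodup : NoDup (map g (seq 0 N))).
  { apply NoDup_map_NoDup_ForallPairs; [|apply seq_NoDup].
    intros m m' Hm Hm'; apply in_seq in Hm, Hm'; apply Hinj; lia. }
  assert (Hincl : incl (map g (seq 0 N)) codes).
  { intros z Hz; apply in_map_iff in Hz as [m [<- Hm]]; apply in_seq in Hm.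
    specialize (Hrange m ltac:(lia)); apply in_or_app.
    destruct (Z.le_gt_cases 0 (g m)); [left | right]; apply in_map_iff.
    - exists (Z.to_nat (g m)); split; [lia|]; apply in_seq; lia.
    - exists (Z.to_nat (- g m)); split; [lia|]; apply in_seq; lia. }
  pose proof (NoDup_incl_length Hnodup Hincl) as Hlen.
  unfold codes in Hlen; rewrite length_app, !length_map, !length_seq in Hlen; lia.
Qed.

(* Pigeonhole: [n + 1] points [d]-separated from each other and from [0] cannot all lie
   in [(-(h + 1) d, (h + 1) d)] with [h = n / 2], since that interval holds at most
   [h] such points on each side of [0]. *)
Lemma exists_far_of_separated n (y : nat -> R) d : 0 < d ->
  (forall m, (m <= n)%nat -> d <= Rabs (y m)) ->
  (forall m m', (m <= n)%nat -> (m' <= n)%nat -> m <> m' -> d <= Rabs (y m - y m')) ->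
  exists m, (m <= n)%nat /\ (INR (n / 2) + 1) * d <= Rabs (y m).
Proof.
  intros Hd Hfar Hsep; set (h := (n / 2)%nat).
  apply NNPP; intros Hnone.
  assert (Hrange : forall m, (m <= n)%nat ->
    (0 <= y m /\ (1 <= signed_floor d (y m) <= Z.of_nat h)%Z) \/
    (y m < 0 /\ (- Z.of_nat h <= signed_floor d (y m) <= -1)%Z)).
  { intros m Hm; apply signed_floor_range; auto; split; [auto|].
    apply Rnot_le_lt; intros Hge; apply Hnone; exists m; auto. }
  assert (Hcard : (S n <= 2 * h)%nat).
  { apply (inj_punctured_range_card _ h (fun m => signed_floor d (y m))).
    - intros m Hm; destruct (Hrange m ltac:(lia)) as [[_ R1] | [_ R1]]; lia.
    - intros m m' Hm Hm' E; destruct (Nat.eq_dec m m') as [|Hne]; [assumption | exfalso].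
      assert (Hsign : (0 <= y m /\ 0 <= y m') \/ (y m < 0 /\ y m' < 0)).
      { destruct (Hrange m ltac:(lia)) as [[S1 R1] | [S1 R1]],
                 (Hrange m' ltac:(lia)) as [[S2 R2] | [S2 R2]]; cbn beta in E; lia || lra. }
      pose proof (signed_floor_close d (y m) (y m') Hd Hsign E).
      pose proof (Hsep m m' ltac:(lia) ltac:(lia) Hne); lra. }
  assert (2 * h <= n)%nat by (unfold h; apply Nat.Div0.mul_div_le); lia.
Qed.

Lemma Rprod_separated_ge n (y : nat -> R) d : 0 < d ->
  (forall m, (m < n)%nat -> d <= Rabs (y m)) ->
  (forall m m', (m < n)%nat -> (m' < n)%nat -> m <> m' -> d <= Rabs (y m - y m')) ->
  half_fact_prod n * d ^ n <= Rprod n (fun m => Rabs (y m)).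
Proof.
  revert y; induction n as [|n IH]; intros y Hd Hfar Hsep.
  - unfold half_fact_prod; simpl; lra.
  - destruct (exists_far_of_separated n y d Hd) as [m0 [Hm0 Hbig]];
      [intros; apply Hfar; lia | intros; apply Hsep; lia |].
    rewrite (Rprod_skip _ _ m0 Hm0), half_fact_prod_S.
    assert (IHm0 : half_fact_prod n * d ^ n <= Rprod n (fun m => Rabs (y (skip m0 m)))).
    { apply IH; auto.
      - intros m Hm; apply Hfar; pose proof (skip_le m0 m n Hm); lia.
      - intros m m' Hm Hm' Hne; pose proof (skip_le m0 m n Hm); pose proof (skip_le m0 m' n Hm').
        apply Hsep; try lia; intros E; apply Hne, (skip_inj m0), E. }
    assert (0 <= half_fact_prod n * d ^ n).
    { apply Rmult_le_pos; [apply Rmult_le_pos; apply pos_INR | apply pow_le; lra]. }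
    pose proof (pos_INR (n / 2)).
    replace (half_fact_prod n * (INR (n / 2) + 1) * d ^ S n)
      with ((INR (n / 2) + 1) * d * (half_fact_prod n * d ^ n)) by (simpl; ring).
    apply Rmult_le_compat; auto; nra.
Qed.

Lemma div2_eq a q rm : (rm < 2)%nat -> a = (2 * q + rm)%nat -> (a / 2)%nat = q.
Proof. intros Hrm ->; symmetry; apply (Nat.div_unique _ 2 q rm); lia. Qed.

Lemma zeta_succ k : zeta (k + 1) = half_fact_prod k.
Proof.
  unfold zeta, half_fact_prod; destruct (Nat.Even_or_Odd k) as [[r ->] | [r ->]].
  - rewrite Nat.odd_odd, (div2_eq (2 * r + 1 - 1) r 0), (div2_eq (2 * r) r 0),
      (div2_eq (2 * r + 1) r 1) by lia; ring.
  - replace (2 * r + 1 + 1)%nat with (2 * (r + 1))%nat by lia.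
    rewrite Nat.odd_even, (div2_eq (2 * (r + 1)) (r + 1) 0), (div2_eq (2 * (r + 1) - 2) r 0),
      (div2_eq (2 * r + 1) r 1) by lia; ring.
Qed.

Lemma succ_mul_xi_le k : (1 <= k)%nat -> INR (S k) * xi k <= half_fact_prod k.
Proof.
  intros Hk; unfold xi, half_fact_prod.
  destruct (Nat.Even_or_Odd k) as [[r ->] | [r ->]].
  - destruct r as [|r]; [lia|].
    replace (2 * S r =? 1)%nat with false by (symmetry; apply Nat.eqb_neq; lia).
    rewrite Nat.odd_even, (div2_eq (2 * S r - 2) r 0), (div2_eq (2 * S r) (S r) 0),
      (div2_eq (2 * S r + 1) (S r) 1) by lia.
    rewrite fact_simpl; repeat rewrite ?S_INR, ?mult_INR.
    pose proof (pos_INR r); pose proof (pos_INR (fact r)).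
    assert (HF : 0 <= INR (fact r) ^ 2) by nra.
    change (INR 0) with 0.
    assert (Hc : (2 * (INR r + 1) + 1) / 4 <= (INR r + 1) ^ 2) by nra.
    apply (Rmult_le_compat_r (INR (fact r) ^ 2)) in Hc; [|exact HF].
    lra.
  - destruct r as [|r]; [simpl; lra|].
    replace (2 * S r + 1 =? 1)%nat with false by (symmetry; apply Nat.eqb_neq; lia).
    rewrite Nat.odd_odd, (div2_eq (2 * S r + 1 - 1) (S r) 0), (div2_eq (2 * S r + 1 - 3) r 0),
      (div2_eq (2 * S r + 1) (S r) 1), (div2_eq (2 * S r + 1 + 1) (S (S r)) 0) by lia.
    rewrite !fact_simpl; repeat rewrite ?S_INR, ?mult_INR, ?plus_INR.
    pose proof (pos_INR r); pose proof (pos_INR (fact r)).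
    assert (HF : 0 <= INR (fact r) ^ 2) by nra.
    change (INR 0) with 0.
    assert (Hc : (2 * (INR r + 1) + 2) / 4 <= (INR r + 2) * (INR r + 1)) by nra.
    apply (Rmult_le_compat_r ((INR r + 1) * INR (fact r) ^ 2)) in Hc; [|nra].
    lra.
Qed.

(** * The lower bound *)

Lemma node_prod_Cexpi_ge k j0 (theta : nat -> R) d : 0 < d -> (j0 <= k)%nat ->
  (forall p j, (p <= k)%nat -> (j <= k)%nat -> p <> j -> d <= Rabs (theta p - theta j)) ->
  (forall p j, (p <= k)%nat -> (j <= k)%nat -> Rabs (theta p - theta j) <= PI) ->
  (2 / PI) ^ k * (half_fact_prod k * d ^ k)
  <= Cnorm (node_prod (fun j => Cexpi (theta j)) k j0).
Proof.
  intros Hd Hj0 Hsep Hpi; pose proof PI_RGT_0.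
  rewrite node_prod_skip, Cnorm_Cprod by exact Hj0.
  set (y := fun m => theta (skip j0 m) - theta j0).
  assert (Hy : half_fact_prod k * d ^ k <= Rprod k (fun m => Rabs (y m))).
  { apply Rprod_separated_ge; auto; intros m; [|intros m' Hm Hm' Hne]; unfold y.
    - intros Hm; apply Hsep; auto using skip_le, skip_neq.
    - replace (theta (skip j0 m) - theta j0 - (theta (skip j0 m') - theta j0))
        with (theta (skip j0 m) - theta (skip j0 m')) by ring.
      apply Hsep; auto using skip_le; intros E; apply Hne, (skip_inj j0), E. }
  apply (Rmult_le_compat_l ((2 / PI) ^ k)) in Hy; [|apply pow_le, Rlt_le, Rdiv_lt_0_compat; lra].
  eapply Rle_trans; [exact Hy|].
  rewrite <- Rprod_const, <- Rprod_mult; apply Rprod_le; intros m Hm; split.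
  - apply Rmult_le_pos; [apply Rlt_le, Rdiv_lt_0_compat; lra | apply Rabs_pos].
  - unfold y; rewrite Rabs_minus_sym.
    pose proof (Cmod_Cexpi_sub_ge (theta j0) (theta (skip j0 m))
                  (Hpi _ _ Hj0 (skip_le j0 m k Hm))).
    unfold Rdiv in *; lra.
Qed.

Lemma exists_node_prod_residual_le k q (theta thetah : nat -> R) (a ah : nat -> C) :
  (q <= k)%nat -> distinct (fun j => Cexpi (theta j)) k ->
  exists j0, (j0 <= k)%nat /\
    Cnorm (a j0) * Cnorm (node_prod (fun j => Cexpi (theta j)) k j0) ^ 2
    <= INR (S k) * 2 ^ (2 * k) *
       norm2 (2 * k) (fun l => Cadd (mat_vec (2 * k) q thetah ah l)
                                    (Copp (mat_vec (2 * k) (S k) theta a l))).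
Proof.
  intros Hqk Hd; set (e := fun j => Cexpi (theta j)).
  set (c := fun i => if (i <? q)%nat then Cexpi (thetah i) else RtoC 1).
  destruct (exists_node_prod_le e k c Hd) as [j0 [Hj0 Hpick]].
  exists j0; split; [exact Hj0|].
  (* roots: the [q] estimated frequencies padded with [1] up to [k] roots, followed by
     every true frequency except [e j0] *)
  set (r := fun i => if (i <? k)%nat then c i else e (skip j0 (i - k))).
  set (V := fun l => (mat_vec (2 * k) q thetah ah l - mat_vec (2 * k) (S k) theta a l)%C).
  change (norm2 (2 * k) _) with (norm2 (2 * k) V).
  assert (Hpoly : poly_of_roots r (2 * k) (e j0)
                  = (poly_of_roots c k (e j0) * node_prod e k j0)%C).
  { replace (2 * k)%nat with (k + k)%nat by lia.
    unfold poly_of_roots; rewrite Cprod_add, node_prod_skip by exact Hj0.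
    f_equal; apply Cprod_ext; intros i Hi; unfold r.
    - destruct (Nat.ltb_spec i k); [reflexivity | lia].
    - destruct (Nat.ltb_spec (k + i) k); [lia|].
      now replace (k + i - k)%nat with i by lia. }
  assert (Hfilter : shift_filter r (2 * k) V 0 = (- (poly_of_roots r (2 * k) (e j0) * a j0))%C).
  { apply shift_filter_residual; [exact Hj0 | |].
    - intros j Hj; exists j; split; [lia|]; unfold r, c.
      destruct (Nat.ltb_spec j k), (Nat.ltb_spec j q); [reflexivity | lia ..].
    - intros j Hj Hne; destruct (skip_onto j0 k j Hj0 Hj Hne) as [m [Hm <-]].
      exists (k + m)%nat; split; [lia|]; unfold r.
      destruct (Nat.ltb_spec (k + m) k); [lia|].
      now replace (k + m - k)%nat with m by lia. }
  assert (Hbound : Cnorm (shift_filter r (2 * k) V 0) <= 2 ^ (2 * k) * norm2 (2 * k) V).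
  { apply (shift_filter_bound _ _ _ (2 * k)); [| intros; apply Cnorm_le_norm2; auto | lia].
    intros i _; unfold r, c, e.
    destruct (i <? k)%nat; [destruct (i <? q)%nat|]; apply Cmod_Cexpi || apply Cmod_1. }
  rewrite Hfilter, Hpoly, Cmod_opp, !Cmod_mult in Hbound.
  pose proof (Cmod_ge_0 (a j0)); pose proof (Cmod_ge_0 (node_prod e k j0)).
  pose proof (Cmod_ge_0 (poly_of_roots c k (e j0))).
  apply (Rmult_le_compat_l (Cnorm (a j0) * Cnorm (node_prod e k j0))) in Hpick; [|nra].
  apply (Rmult_le_compat_l (INR (S k))) in Hbound; [|apply pos_INR].
  lra.
Qed.

Lemma norm2_ge_of_node_bounds k (Z X m A D N t : R) :
  0 < m -> m <= A -> 0 <= Z -> INR (S k) * X <= Z -> 0 <= t ->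
  (2 / PI) ^ k * (Z * t ^ k) <= D -> A * D ^ 2 <= INR (S k) * 2 ^ (2 * k) * N ->
  Z * X * m * t ^ (2 * k) / PI ^ (2 * k) <= N.
Proof.
  intros Hm HmA HZ HXZ Ht HD HAD; pose proof PI_RGT_0.
  assert (HK : 0 < INR (S k)) by (apply lt_0_INR; lia).
  unfold Rdiv in HD; rewrite Rpow_mult_distr, pow_inv in HD.
  replace (2 * k)%nat with (k * 2)%nat in * by lia; rewrite !pow_mult in *.
  assert (HP : 0 < PI ^ k) by (apply pow_lt; lra).
  assert (HW : 0 < 2 ^ k) by (apply pow_lt; lra).
  assert (HT : 0 <= t ^ k) by (apply pow_le; lra).
  set (P := PI ^ k) in *; set (W := 2 ^ k) in *; set (T := t ^ k) in *.
  assert (HG : 0 <= W * / P * (Z * T))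
    by (apply Rmult_le_pos; [apply Rlt_le, Rdiv_lt_0_compat |]; nra).
  assert (HmD : m * (W * / P * (Z * T)) ^ 2 <= INR (S k) * W ^ 2 * N).
  { apply (Rle_trans _ (A * D ^ 2)); [|exact HAD].
    apply Rmult_le_compat; [lra | apply pow_le; lra | exact HmA | apply pow_incr; lra]. }
  assert (HZN : m * Z ^ 2 * T ^ 2 / P ^ 2 <= INR (S k) * N).
  { apply (Rmult_le_reg_l (W ^ 2)); [nra|].
    replace (W ^ 2 * (m * Z ^ 2 * T ^ 2 / P ^ 2)) with (m * (W * / P * (Z * T)) ^ 2)
      by (field; lra).
    lra. }
  apply (Rmult_le_reg_l (INR (S k))); [exact HK|].
  apply (Rle_trans _ (m * Z ^ 2 * T ^ 2 / P ^ 2)); [|exact HZN].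
  replace (m * Z ^ 2 * T ^ 2 / P ^ 2) with (Z * (Z * m * T ^ 2 / P ^ 2)) by (field; lra).
  replace (INR (S k) * (Z * X * m * T ^ 2 / P ^ 2)) with (INR (S k) * X * (Z * m * T ^ 2 / P ^ 2))
    by (field; lra).
  apply Rmult_le_compat_r; [|exact HXZ].
  apply Rmult_le_pos; [apply Rmult_le_pos; nra | apply Rlt_le, Rinv_0_lt_compat; nra].
Qed.

Theorem theorem3p2 (k : nat) (theta : nat -> R) (a : nat -> Cpx)
  (theta_min m_min : R) :
  (1 <= k)%nat ->
  (forall j, (j <= k)%nat -> - (PI / 2) <= theta j <= PI / 2) ->
  (forall p j, (p <= k)%nat -> (j <= k)%nat -> p <> j -> theta p <> theta j) ->
  (forall p j, (p <= k)%nat -> (j <= k)%nat -> p <> j ->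
       theta_min <= Rabs (theta p - theta j)) ->
  (exists p j, (p <= k)%nat /\ (j <= k)%nat /\ p <> j /\
       theta_min = Rabs (theta p - theta j)) ->
  0 < m_min ->
  (forall j, (j <= k)%nat -> m_min <= Cmod (a j)) ->
  forall (q : nat), (1 <= q)%nat -> (q <= k)%nat ->
  forall (thetah : nat -> R) (ah : nat -> Cpx),
    norm2 (2 * k)
      (fun l => Cadd (mat_vec (2 * k) q thetah ah l)
                     (Copp (mat_vec (2 * k) (S k) theta a l)))
    >= zeta (k + 1) * xi k * m_min * theta_min ^ (2 * k) / PI ^ (2 * k).
Proof.
  intros Hk Hrange Hdist Hsep Hattained Hm Ha q _ Hqk thetah ah.
  assert (Hpi : forall p j, (p <= k)%nat -> (j <= k)%nat -> Rabs (theta p - theta j) <= PI).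
  { intros p j Hp Hj; destruct (Hrange p Hp), (Hrange j Hj); apply Rabs_le; lra. }
  assert (Htm : 0 < theta_min).
  { destruct Hattained as [p [j [Hp [Hj [Hpj ->]]]]]; apply Rabs_pos_lt.
    pose proof (Hdist p j Hp Hj Hpj); lra. }
  assert (Hd : distinct (fun j => Cexpi (theta j)) k).
  { intros p j Hp Hj Hpj E; apply (Hdist p j Hp Hj Hpj), Cexpi_inj_on; auto. }
  destruct (exists_node_prod_residual_le k q theta thetah a ah Hqk Hd) as [j0 [Hj0 Hres]].
  pose proof (node_prod_Cexpi_ge k j0 theta theta_min Htm Hj0 Hsep Hpi) as Hnode.
  apply Rle_ge; rewrite zeta_succ.
  eapply norm2_ge_of_node_bounds;
    [exact Hm | exact (Ha j0 Hj0) | | apply succ_mul_xi_le, Hk | lra | exact Hnode | exact Hres].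
  unfold half_fact_prod; apply Rmult_le_pos; apply pos_INR.
Qed.
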